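(* Let $H$ be a complex infinite-dimensional separable Hilbert space and let $(f_n)_{n=1}^\infty$ be a frame for $H$ with optimal upper frame bound $B$ such that the series $\sum_{n=1}^\infty(B-\|f_n\|^2)$ converges. Then $(f_n)_{n=1}^\infty$ is a near-Riesz basis.
   Context: The optimal upper frame bound of a frame is the infimum of all $B$ with $\sum_n|\langle x,f_n\rangle|^2\le B\|x\|^2$ for all $x\in H$ (note $\|f_n\|^2\le B$ for all $n$). The excess of a frame is the maximal number of elements that can be deleted so that the remaining sequence is still a frame. A near-Riesz basis is a frame with finite excess. *)

From Stdlib Require Import Reals List.
Open Scope R_scope.

Record Cx := mkC { Re : R ; Im : R }.
Definition C0 : Cx := mkC 0 0.
Definition C1 : Cx := mkC 1 0.
Definition Cadd (a b : Cx) : Cx := mkC (Re a + Re b) (Im a + Im b).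
Definition Cmul (a b : Cx) : Cx :=
  mkC (Re a * Re b - Im a * Im b) (Re a * Im b + Im a * Re b).
Definition Cconj (a : Cx) : Cx := mkC (Re a) (- Im a).
Definition Cnorm2 (a : Cx) : R := Re a * Re a + Im a * Im a.

(** Complex inner product space (inner product linear in the first argument). *)
Record CInnerSpace := {
  V :> Type;
  vzero : V;
  vadd : V -> V -> V;
  vopp : V -> V;
  vscal : Cx -> V -> V;
  inner : V -> V -> Cx;
  vadd_assoc : forall x y z, vadd x (vadd y z) = vadd (vadd x y) z;
  vadd_comm : forall x y, vadd x y = vadd y x;
  vadd_0 : forall x, vadd x vzero = x;
  vadd_opp : forall x, vadd x (vopp x) = vzero;
  vscal_1 : forall x, vscal C1 x = x;
  vscal_mul : forall a b x, vscal (Cmul a b) x = vscal a (vscal b x);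
  vscal_addv : forall a x y, vscal a (vadd x y) = vadd (vscal a x) (vscal a y);
  vscal_addc : forall a b x, vscal (Cadd a b) x = vadd (vscal a x) (vscal b x);
  inner_add : forall x y z, inner (vadd x y) z = Cadd (inner x z) (inner y z);
  inner_scal : forall a x z, inner (vscal a x) z = Cmul a (inner x z);
  inner_conj : forall x y, inner y x = Cconj (inner x y);
  inner_pos : forall x, 0 <= Re (inner x x);
  inner_def : forall x, inner x x = C0 -> x = vzero
}.

Section H.
Variable H : CInnerSpace.

Definition hnorm (x : H) : R := sqrt (Re (inner H x x)).
Definition vsub (x y : H) : H := vadd H x (vopp H y).

Definition complete : Prop :=
  forall u : nat -> H,
    (forall eps, 0 < eps -> exists N, forall m n, (N <= m)%nat -> (N <= n)%nat ->
        hnorm (vsub (u m) (u n)) < eps) ->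
    exists l : H, forall eps, 0 < eps -> exists N, forall n, (N <= n)%nat ->
        hnorm (vsub (u n) l) < eps.

Definition separable : Prop :=
  exists d : nat -> H, forall (x : H) eps, 0 < eps -> exists n, hnorm (vsub x (d n)) < eps.

Fixpoint lincomb (v : nat -> H) (c : nat -> Cx) (n : nat) : H :=
  match n with
  | O => vzero H
  | S k => vadd H (lincomb v c k) (vscal H (c k) (v k))
  end.

Definition infinite_dimensional : Prop :=
  forall n : nat, exists v : nat -> H,
    forall c : nat -> Cx, lincomb v c n = vzero H -> forall i, (i < n)%nat -> c i = C0.

Definition coef2 (P : nat -> bool) (f : nat -> H) (x : H) (n : nat) : R :=
  if P n then Cnorm2 (inner H x (f n)) else 0.

Definition frame_on (P : nat -> bool) (f : nat -> H) : Prop :=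
  exists A B : R, 0 < A /\
    forall x : H, exists s : R,
      infinite_sum (coef2 P f x) s /\
      A * (hnorm x)^2 <= s /\ s <= B * (hnorm x)^2.

Definition frame (f : nat -> H) : Prop := frame_on (fun _ => true) f.

(** B satisfies sum_n |<x,f_n>|^2 <= B ||x||^2 for all x
    (the series has nonnegative terms, so this means bounded partial sums). *)
Definition upper_frame_bound (f : nat -> H) (B : R) : Prop :=
  forall (x : H) (N : nat),
    sum_f_R0 (coef2 (fun _ => true) f x) N <= B * (hnorm x)^2.

Definition optimal_upper_frame_bound (f : nat -> H) (B : R) : Prop :=
  (forall B', upper_frame_bound f B' -> B <= B') /\
  (forall b, (forall B', upper_frame_bound f B' -> b <= B') -> b <= B).

Definition card_le (S : nat -> bool) (N : nat) : Prop :=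
  forall l : list nat, NoDup l -> (forall n, In n l -> S n = true) -> (length l <= N)%nat.

Definition finite_excess (f : nat -> H) : Prop :=
  exists N : nat, forall S : nat -> bool,
    frame_on (fun n => negb (S n)) f -> card_le S N.

Definition near_Riesz_basis (f : nat -> H) : Prop :=
  frame f /\ finite_excess f.

End H.

(* Let S be a set of indices whose removal leaves a frame, and s_1, ..., s_k in S
   distinct.  (1) Approximation: since (f_n)_{n not in S} is a frame, every vector
   is approximated by combinations of finitely many f_n, n not in S.  This is
   proved directly from the frame inequalities (no completeness is needed), by
   taking a near-minimiser y of the energy Q(y) - 2 Re <g,y>, Q(y) = sum |<y,f_n>|^2,
   and truncating the synthesis sum_n <y,f_n> f_n.  So for M large every f_{s_i}
   lies within squared distance B/2 of span{f_n : n < M, n not in S}.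
   (2) Counting: Gram-Schmidt gives an orthonormal basis of at most M - k vectors
   of span{f_n : n < M, n <> s_i}; Bessel's inequality and the upper frame bound
   (each unit vector carries frame mass at most B) give
   k B/2 <= sum_{n<M} (B - ||f_n||^2) <= L. *)

From Pilot Require Import Defs.
From Stdlib Require Import Reals List Lra Lia Classical ClassicalEpsilon ZArith.
Open Scope R_scope.

(* The complex scalars of Defs, not the micromega constructors of the same names. *)
Notation C0 := Defs.C0.
Notation C1 := Defs.C1.

Lemma Cx_ext (a b : Cx) : Re a = Re b -> Im a = Im b -> a = b.
Proof. destruct a, b; simpl; intros; subst; reflexivity. Qed.

Definition rs (t : R) : Cx := mkC t 0.

Ltac cx_simpl := unfold Cadd, Cmul, Cconj, C0, C1, Cnorm2, rs in *; simpl in *.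

Lemma Cnorm2_nonneg (a : Cx) : 0 <= Cnorm2 a.
Proof. destruct a; cx_simpl; nra. Qed.

Lemma Cnorm2_conj (a : Cx) : Cnorm2 (Cconj a) = Cnorm2 a.
Proof. destruct a; cx_simpl; ring. Qed.

Section InnerProductAlgebra.
Context {H : CInnerSpace}.

(* The squared norm ||x||^2; it avoids square roots throughout. *)
Definition nsq (x : H) : R := Re (inner H x x).

Lemma hnorm2 (x : H) : (hnorm H x)^2 = nsq x.
Proof. unfold hnorm. apply pow2_sqrt, inner_pos. Qed.

Lemma nsq_nonneg (x : H) : 0 <= nsq x.
Proof. apply inner_pos. Qed.

Lemma inner_zero_l (z : H) : inner H (vzero H) z = C0.
Proof.
  assert (E : Cadd (inner H (vzero H) z) (inner H (vzero H) z) = inner H (vzero H) z).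
  { rewrite <- inner_add, vadd_0. reflexivity. }
  revert E. destruct (inner H (vzero H) z); cx_simpl.
  intro E; injection E; intros; apply Cx_ext; simpl; lra.
Qed.

Lemma inner_zero_r (z : H) : inner H z (vzero H) = C0.
Proof. rewrite inner_conj, inner_zero_l. apply Cx_ext; cx_simpl; lra. Qed.

Lemma inner_add_r (x y z : H) :
  inner H x (vadd H y z) = Cadd (inner H x y) (inner H x z).
Proof.
  rewrite inner_conj, inner_add, (inner_conj H y x), (inner_conj H z x).
  destruct (inner H x y), (inner H x z). apply Cx_ext; cx_simpl; lra.
Qed.

Lemma inner_scal_r (a : Cx) (x z : H) :
  inner H x (vscal H a z) = Cmul (Cconj a) (inner H x z).
Proof.
  rewrite inner_conj, inner_scal, (inner_conj H z x).
  destruct (inner H x z), a. apply Cx_ext; cx_simpl; ring.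
Qed.

Lemma inner_opp_l (x z : H) :
  inner H (vopp H x) z = Cmul (rs (-1)) (inner H x z).
Proof.
  assert (E : Cadd (inner H x z) (inner H (vopp H x) z) = C0).
  { rewrite <- inner_add, vadd_opp. apply inner_zero_l. }
  revert E. destruct (inner H x z), (inner H (vopp H x) z); cx_simpl.
  intro E; injection E; intros; apply Cx_ext; simpl; lra.
Qed.

Lemma inner_opp_r (x z : H) :
  inner H x (vopp H z) = Cmul (rs (-1)) (inner H x z).
Proof.
  rewrite inner_conj, inner_opp_l, (inner_conj H z x).
  destruct (inner H x z). apply Cx_ext; cx_simpl; ring.
Qed.

Lemma orth_sym (x y : H) : inner H x y = C0 -> inner H y x = C0.
Proof. intro E. rewrite inner_conj, E. apply Cx_ext; cx_simpl; lra. Qed.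

Lemma inner_self_Im (x : H) : Im (inner H x x) = 0.
Proof.
  pose proof (inner_conj H x x) as E. destruct (inner H x x); cx_simpl.
  injection E; intros; lra.
Qed.

Lemma inner_self_Cnorm2 (x : H) : Cnorm2 (inner H x x) = nsq x * nsq x.
Proof. unfold nsq. pose proof (inner_self_Im x). destruct (inner H x x); cx_simpl; subst; ring. Qed.

Lemma nsq_zero (x : H) : nsq x = 0 -> x = vzero H.
Proof. intro E. apply inner_def, Cx_ext; [exact E | apply inner_self_Im]. Qed.

Lemma nsq_vzero : nsq (vzero H) = 0.
Proof. unfold nsq. rewrite inner_zero_l. reflexivity. Qed.

Lemma nsq_add (x y : H) :
  nsq (vadd H x y) = nsq x + nsq y + 2 * Re (inner H x y).
Proof.
  unfold nsq. rewrite inner_add, !inner_add_r, (inner_conj H y x). cx_simpl. ring.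
Qed.

Lemma nsq_scal (a : Cx) (x : H) : nsq (vscal H a x) = Cnorm2 a * nsq x.
Proof.
  unfold nsq. rewrite inner_scal, inner_scal_r. pose proof (inner_self_Im x).
  destruct (inner H x x), a; cx_simpl; subst; ring.
Qed.

Lemma nsq_add_rs (x y : H) (t : R) :
  nsq (vadd H x (vscal H (rs t) y)) = nsq x + 2 * t * Re (inner H x y) + t * t * nsq y.
Proof.
  rewrite nsq_add, nsq_scal, inner_scal_r. cx_simpl. ring.
Qed.

Lemma vsub_self (x : H) : vsub H x x = vzero H.
Proof. apply vadd_opp. Qed.

Lemma vadd_vsub (p x : H) : vadd H p (vsub H x p) = x.
Proof.
  unfold vsub. rewrite vadd_comm, <- vadd_assoc, (vadd_comm H (vopp H p) p), vadd_opp, vadd_0.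
  reflexivity.
Qed.

Lemma vsub_split (x p v : H) : vsub H x v = vadd H (vsub H x p) (vsub H p v).
Proof.
  unfold vsub. rewrite <- vadd_assoc, (vadd_assoc H (vopp H p) p),
    (vadd_comm H (vopp H p) p), vadd_opp, (vadd_comm H (vzero H)), vadd_0. reflexivity.
Qed.

Lemma nsq_vsub (x v : H) :
  nsq (vsub H x v) = Re (inner H x (vsub H x v)) - Re (inner H v (vsub H x v)).
Proof. unfold nsq, vsub at 1. rewrite inner_add, inner_opp_l. cx_simpl. ring. Qed.

End InnerProductAlgebra.

Fixpoint lsum {A : Type} (g : A -> R) (l : list A) : R :=
  match l with nil => 0 | a :: l' => g a + lsum g l' end.

Section ListSums.
Context {A : Type}.

Lemma lsum_ext (g h : A -> R) l : (forall a, g a = h a) -> lsum g l = lsum h l.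
Proof. intro E; induction l; simpl; [reflexivity|rewrite E, IHl; reflexivity]. Qed.

Lemma lsum_app (g : A -> R) l1 l2 : lsum g (l1 ++ l2) = lsum g l1 + lsum g l2.
Proof. induction l1; simpl; [ring|rewrite IHl1; ring]. Qed.

Lemma lsum_le (g h : A -> R) l : (forall a, In a l -> g a <= h a) -> lsum g l <= lsum h l.
Proof.
  induction l; simpl; intros Hl; [lra|].
  pose proof (Hl a (or_introl eq_refl)). pose proof (IHl (fun b Hb => Hl b (or_intror Hb))). lra.
Qed.

Lemma lsum_nonneg (g : A -> R) l : (forall a, 0 <= g a) -> 0 <= lsum g l.
Proof. intros Hg; induction l; simpl; [lra|]. pose proof (Hg a); lra. Qed.

Lemma lsum_plus (g h : A -> R) l : lsum (fun a => g a + h a) l = lsum g l + lsum h l.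
Proof. induction l; simpl; [ring|rewrite IHl; ring]. Qed.

Lemma lsum_minus (g h : A -> R) l : lsum (fun a => g a - h a) l = lsum g l - lsum h l.
Proof. induction l; simpl; [ring|rewrite IHl; ring]. Qed.

Lemma lsum_const c (l : list A) : lsum (fun _ => c) l = c * INR (length l).
Proof. induction l; simpl length; [simpl; ring|]. rewrite S_INR. simpl. rewrite IHl. ring. Qed.

Lemma lsum_indicator (p : A -> bool) c l :
  lsum (fun a => if p a then c else 0) l = c * INR (length (filter p l)).
Proof.
  induction l; simpl; [ring|]. destruct (p a); simpl length; [rewrite S_INR|]; rewrite IHl; ring.
Qed.

End ListSums.

Lemma lsum_swap {A B : Type} (g : A -> B -> R) la lb :
  lsum (fun a => lsum (fun b => g a b) lb) la = lsum (fun b => lsum (fun a => g a b) la) lb.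
Proof.
  induction la; simpl.
  - induction lb; simpl; [reflexivity|rewrite <- IHlb; ring].
  - rewrite IHla, <- lsum_plus. reflexivity.
Qed.

Definition psum (g : nat -> R) (M : nat) : R := lsum g (seq 0 M).

Lemma psum_S g M : psum g (S M) = psum g M + g M.
Proof. unfold psum. rewrite seq_S, lsum_app. simpl. ring. Qed.

Lemma psum_sum g M : psum g (S M) = sum_f_R0 g M.
Proof. induction M; [unfold psum; simpl; ring|]. rewrite psum_S, IHM. reflexivity. Qed.

Lemma psum_nonneg g M : (forall n, 0 <= g n) -> 0 <= psum g M.
Proof. intros; apply lsum_nonneg; assumption. Qed.

Lemma psum_le_lim g l M : (forall n, 0 <= g n) -> infinite_sum g l -> psum g M <= l.
Proof.
  intros Hg Hs.
  assert (Hgr : Un_growing (sum_f_R0 g)) by (intro n; simpl; pose proof (Hg (S n)); lra).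
  pose proof (growing_ineq _ _ Hgr Hs M) as HM. rewrite <- psum_sum, psum_S in HM.
  pose proof (Hg M). lra.
Qed.

Lemma lim_le g l K : infinite_sum g l -> (forall M, psum g M <= K) -> l <= K.
Proof.
  intros Hs HK. apply (Rle_cv_lim (Un:=sum_f_R0 g) (Vn:=fun _ => K)).
  - intro n. rewrite <- psum_sum. apply HK.
  - exact Hs.
  - intros e He. exists O. intros. unfold R_dist. rewrite Rminus_diag, Rabs_R0. exact He.
Qed.

Lemma cv_psum g l : infinite_sum g l ->
  forall e, 0 < e -> exists N, forall M, (N <= M)%nat -> Rabs (psum g M - l) < e.
Proof.
  intros Hs e He. destruct (Hs e He) as [N HN]. exists (S N). intros M HM.
  destruct M as [|M]; [lia|]. rewrite psum_sum. apply HN. lia.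
Qed.

Lemma lim_dist c C a K M0 : infinite_sum c C ->
  (forall N, (M0 <= N)%nat -> Rabs (psum c N - a) <= K) -> Rabs (C - a) <= K.
Proof.
  intros Hs HK. destruct (Rle_dec (Rabs (C - a)) K) as [h|h]; [exact h|].
  exfalso. destruct (cv_psum c C Hs (Rabs (C - a) - K)) as [N HN]; [lra|].
  set (N' := Nat.max N M0).
  pose proof (HN N' (Nat.le_max_l _ _)) as Hnear. pose proof (HK N' (Nat.le_max_r _ _)).
  pose proof (Rabs_triang (C - psum c N') (psum c N' - a)) as Htri.
  replace (C - psum c N' + (psum c N' - a)) with (C - a) in Htri by ring.
  rewrite Rabs_minus_sym in Hnear. lra.
Qed.

Lemma infinite_sum_lin u v a b al be :
  infinite_sum u a -> infinite_sum v b ->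
  infinite_sum (fun n => al * u n + be * v n) (al * a + be * b).
Proof.
  intros Hu Hv.
  assert (Hconst : forall c, Un_cv (fun _ => c) c).
  { intros c e He. exists O. intros. unfold R_dist. rewrite Rminus_diag, Rabs_R0. exact He. }
  apply (Un_cv_ext (fun N => al * sum_f_R0 u N + be * sum_f_R0 v N)).
  - intro n. rewrite sum_plus, !scal_sum. f_equal; apply sum_eq; intros; ring.
  - apply CV_plus; apply CV_mult; auto.
Qed.

Lemma infinite_sum_ext u v l : (forall n, u n = v n) -> infinite_sum u l -> infinite_sum v l.
Proof.
  intros E. apply Un_cv_ext. intro n. apply sum_eq. intros; apply E.
Qed.

Lemma nat_above (x : R) : exists N : nat, x <= INR N.
Proof.
  destruct (archimed x) as [h1 _]. exists (Z.to_nat (up x)).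
  destruct (Z_lt_le_dec (up x) 0) as [hz|hz].
  - apply IZR_lt in hz. pose proof (pos_INR (Z.to_nat (up x))). lra.
  - rewrite INR_IZR_INZ, Z2Nat.id by exact hz. lra.
Qed.

Section FiniteDimensionalGeometry.
Context {H : CInnerSpace}.

Inductive orthonormal : list H -> Prop :=
| orthonormal_nil : orthonormal nil
| orthonormal_cons u ys : orthonormal ys -> (forall y, In y ys -> inner H u y = C0) ->
    inner H u u = C1 -> orthonormal (u :: ys).

Inductive spanned (L : list H) : H -> Prop :=
| sp_base x : In x L -> spanned L x
| sp_zero : spanned L (vzero H)
| sp_add x y : spanned L x -> spanned L y -> spanned L (vadd H x y)
| sp_opp x : spanned L x -> spanned L (vopp H x)
| sp_scal a x : spanned L x -> spanned L (vscal H a x).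

Fixpoint proj (ys : list H) (x : H) : H :=
  match ys with
  | nil => vzero H
  | y :: ys' => vadd H (vscal H (inner H x y) y) (proj ys' x)
  end.

Lemma spanned_trans (L L' : list H) (w : H) :
  spanned L w -> (forall h, In h L -> spanned L' h) -> spanned L' w.
Proof.
  intros Hs Hh. induction Hs.
  - apply Hh; assumption.
  - apply sp_zero.
  - apply sp_add; assumption.
  - apply sp_opp; assumption.
  - apply sp_scal; assumption.
Qed.

Lemma spanned_incl (L L' : list H) (w : H) : incl L L' -> spanned L w -> spanned L' w.
Proof. intros Hi Hs. apply (spanned_trans L); [exact Hs|]. intros h Hh. apply sp_base, Hi, Hh. Qed.

Lemma spanned_orth (L : list H) (r w : H) :
  (forall y, In y L -> inner H r y = C0) -> spanned L w -> inner H r w = C0.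
Proof.
  intros Hr Hs. induction Hs.
  - apply Hr; assumption.
  - apply inner_zero_r.
  - rewrite inner_add_r, IHHs1, IHHs2. apply Cx_ext; cx_simpl; lra.
  - rewrite inner_opp_r, IHHs. apply Cx_ext; cx_simpl; lra.
  - rewrite inner_scal_r, IHHs. destruct a; apply Cx_ext; cx_simpl; lra.
Qed.

Lemma proj_spanned (ys : list H) (x : H) : spanned ys (proj ys x).
Proof.
  induction ys as [|y ys IH]; simpl.
  - apply sp_zero.
  - apply sp_add.
    + apply sp_scal, sp_base; left; reflexivity.
    + apply (spanned_incl ys); [intros h Hh; right; exact Hh | exact IH].
Qed.

Lemma proj_inner_orth (ys : list H) (x w : H) :
  (forall y, In y ys -> inner H y w = C0) -> inner H (proj ys x) w = C0.
Proof.
  induction ys as [|y ys IH]; intro Hy; simpl.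
  - apply inner_zero_l.
  - rewrite inner_add, inner_scal, Hy by (left; reflexivity).
    rewrite IH by (intros; apply Hy; right; assumption).
    destruct (inner H x y). apply Cx_ext; cx_simpl; ring.
Qed.

Lemma proj_inner (ys : list H) (x y0 : H) :
  orthonormal ys -> In y0 ys -> inner H (proj ys x) y0 = inner H x y0.
Proof.
  intros HO. induction HO as [|u ys HO IH Hu Huu]; intros Hin; [destruct Hin|].
  simpl. rewrite inner_add, inner_scal. destruct Hin as [<-|Hin].
  - rewrite Huu, proj_inner_orth.
    + destruct (inner H x u). apply Cx_ext; cx_simpl; ring.
    + intros y Hy. apply orth_sym, Hu, Hy.
  - rewrite Hu, IH by exact Hin.
    destruct (inner H x y0), (inner H x u). apply Cx_ext; cx_simpl; ring.
Qed.

Lemma proj_nsq (ys : list H) (x : H) :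
  orthonormal ys -> nsq (proj ys x) = lsum (fun y => Cnorm2 (inner H x y)) ys.
Proof.
  intros HO. induction HO as [|u ys HO IH Hu Huu]; simpl.
  - apply nsq_vzero.
  - rewrite nsq_add, nsq_scal, IH, inner_scal.
    rewrite (orth_sym _ _ (proj_inner_orth ys x u (fun y Hy => orth_sym _ _ (Hu y Hy)))).
    unfold nsq at 1. rewrite Huu. destruct (inner H x u). cx_simpl. ring.
Qed.

Lemma resid_orth (ys : list H) (x y : H) :
  orthonormal ys -> In y ys -> inner H (vsub H x (proj ys x)) y = C0.
Proof.
  intros HO Hy. unfold vsub. rewrite inner_add, inner_opp_l, proj_inner by assumption.
  destruct (inner H x y). apply Cx_ext; cx_simpl; lra.
Qed.

(* Bessel with defect: for v in the span of an orthonormal list,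
   ||x||^2 <= sum_y |<x,y>|^2 + ||x - v||^2 (Pythagoras for x = P x + (x - P x)). *)
Lemma bessel_dist (ys : list H) (x v : H) :
  orthonormal ys -> spanned ys v ->
  nsq x <= lsum (fun y => Cnorm2 (inner H x y)) ys + nsq (vsub H x v).
Proof.
  intros HO Hv. set (p := proj ys x). set (r := vsub H x p).
  assert (Hr : forall w, spanned ys w -> inner H r w = C0).
  { intros w Hw. apply (spanned_orth ys); [|exact Hw]. intros y Hy. apply resid_orth; assumption. }
  assert (Hp : spanned ys p) by apply proj_spanned.
  assert (Ex : nsq x = nsq p + nsq r).
  { rewrite <- (vadd_vsub p x) at 1. fold r. rewrite nsq_add, (orth_sym _ _ (Hr p Hp)). simpl. ring. }
  assert (Exv : nsq (vsub H x v) = nsq r + nsq (vsub H p v)).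
  { rewrite (vsub_split x p v). fold r. rewrite nsq_add, (Hr (vsub H p v)); [simpl; ring|].
    apply sp_add; [exact Hp | apply sp_opp, Hv]. }
  pose proof (nsq_nonneg (vsub H p v)).
  rewrite Ex, Exv. unfold p in *. rewrite proj_nsq by exact HO. lra.
Qed.

Lemma orthonormal_extend (ys : list H) (r : H) :
  orthonormal ys -> (forall y, In y ys -> inner H r y = C0) -> 0 < nsq r ->
  exists u, orthonormal (u :: ys) /\ spanned (u :: ys) r.
Proof.
  intros HO Hr Hpos. set (s := sqrt (nsq r)).
  assert (Hs0 : 0 < s) by (apply sqrt_lt_R0; exact Hpos).
  assert (Hss : s * s = nsq r) by (apply sqrt_sqrt; lra).
  exists (vscal H (rs (/ s)) r). split.
  - constructor; [exact HO| |].
    + intros y Hy. rewrite inner_scal, Hr by exact Hy. apply Cx_ext; cx_simpl; ring.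
    + rewrite inner_scal, inner_scal_r. pose proof (inner_self_Im r).
      unfold nsq in Hss. destruct (inner H r r). apply Cx_ext; cx_simpl; subst; [field; lra | ring].
  - replace r with (vscal H (rs s) (vscal H (rs (/ s)) r)) at 2.
    + apply sp_scal, sp_base; left; reflexivity.
    + rewrite <- vscal_mul. replace (Cmul (rs s) (rs (/ s))) with C1; [apply vscal_1|].
      apply Cx_ext; cx_simpl; field; lra.
Qed.

Lemma gram_schmidt (hs : list H) :
  exists ys, orthonormal ys /\ (length ys <= length hs)%nat /\ forall h, In h hs -> spanned ys h.
Proof.
  induction hs as [|h hs IH].
  - exists nil. split; [constructor|split; [simpl; lia|intros h []]].
  - destruct IH as [ys [HO [Hl Hs]]].
    set (r := vsub H h (proj ys h)).
    assert (Hh : vadd H (proj ys h) r = h) by apply vadd_vsub.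
    destruct (Req_dec (nsq r) 0) as [E|E].
    + exists ys. split; [exact HO|split; [simpl; lia|]].
      intros h' [<-|Hh']; [|apply Hs, Hh'].
      rewrite <- Hh, (nsq_zero r E), vadd_0. apply proj_spanned.
    + destruct (orthonormal_extend ys r HO) as [u [HOu Hru]].
      { intros y Hy. apply resid_orth; assumption. }
      { pose proof (nsq_nonneg r); lra. }
      assert (Hmono : forall w, spanned ys w -> spanned (u :: ys) w).
      { intros w. apply spanned_incl. intros y Hy; right; exact Hy. }
      exists (u :: ys). split; [exact HOu|split; [simpl; lia|]].
      intros h' [<-|Hh']; [|apply Hmono, Hs, Hh'].
      rewrite <- Hh. apply sp_add; [apply Hmono, proj_spanned | exact Hru].
Qed.

Lemma orthonormal_nsq (ys : list H) : orthonormal ys -> forall y, In y ys -> nsq y = 1.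
Proof.
  intros HO. induction HO as [|u ys HO IH Hu Huu]; intros y Hy; [destruct Hy|].
  destruct Hy as [<-|Hy]; [unfold nsq; rewrite Huu; reflexivity|apply IH, Hy].
Qed.

End FiniteDimensionalGeometry.

Section UpperFrameBounds.
Context {H : CInnerSpace}.

Lemma coef2_nonneg P (f : nat -> H) x n : 0 <= coef2 H P f x n.
Proof. unfold coef2. destruct (P n); [apply Cnorm2_nonneg|lra]. Qed.

Lemma frame_on_nsq P (f : nat -> H) : frame_on H P f ->
  exists A K, 0 < A /\ 0 < K /\ forall x, exists s,
    infinite_sum (coef2 H P f x) s /\ A * nsq x <= s /\ s <= K * nsq x.
Proof.
  intros [A [BP [HA Hx]]]. exists A, (Rabs BP + 1).
  split; [exact HA|split; [pose proof (Rabs_pos BP); lra|]]. intros x.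
  destruct (Hx x) as [s [Hs [Hlo Hhi]]]. exists s. rewrite !hnorm2 in *.
  split; [exact Hs|split; [exact Hlo|]].
  pose proof (nsq_nonneg x). pose proof (Rle_abs BP). nra.
Qed.

Lemma optimal_bound_upper (f : nat -> H) B :
  optimal_upper_frame_bound H f B -> upper_frame_bound H f B.
Proof.
  intros [_ HB] x N. rewrite hnorm2.
  set (s := sum_f_R0 (coef2 H (fun _ => true) f x) N).
  destruct (Req_dec (nsq x) 0) as [E|E].
  - apply nsq_zero in E. subst x. rewrite nsq_vzero.
    assert (Hs : s = 0).
    { unfold s. rewrite (sum_eq _ (fun _ => 0)), sum_cte; [ring|].
      intros. unfold coef2. rewrite inner_zero_l. cx_simpl. ring. }
    lra.
  - assert (Hp : 0 < nsq x) by (pose proof (nsq_nonneg x); lra).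
    assert (Hb : s / nsq x <= B).
    { apply HB. intros B' HB'. pose proof (HB' x N) as h. rewrite hnorm2 in h. fold s in h.
      apply (Rmult_le_reg_r (nsq x)); [exact Hp|].
      unfold Rdiv. rewrite Rmult_assoc, Rinv_l by lra. lra. }
    apply (Rmult_le_compat_r (nsq x)) in Hb; [|lra].
    unfold Rdiv in Hb. rewrite Rmult_assoc, Rinv_l in Hb by lra. lra.
Qed.

Lemma nonzero_vector : infinite_dimensional H -> exists x : H, 0 < nsq x.
Proof.
  intros Hinf. destruct (Hinf 1%nat) as [v Hv]. exists (v O).
  destruct (Req_dec (nsq (v O)) 0) as [E|E]; [|pose proof (nsq_nonneg (v O)); lra].
  exfalso. apply nsq_zero in E.
  assert (h : C1 = C0).
  { apply (Hv (fun _ => C1)) with (i := O); [|lia]. simpl. rewrite vscal_1, E, vadd_0. reflexivity. }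
  injection h. lra.
Qed.

Lemma upper_bound_psum (f : nat -> H) B :
  upper_frame_bound H f B -> 0 <= B ->
  forall x M, psum (fun n => Cnorm2 (inner H x (f n))) M <= B * nsq x.
Proof.
  intros Hub HB x M. destruct M as [|M].
  - unfold psum; simpl. pose proof (nsq_nonneg x). nra.
  - rewrite psum_sum. pose proof (Hub x M) as h. rewrite hnorm2 in h. exact h.
Qed.

(* On a nonzero space, an upper bound of a frame is positive (by the lower bound). *)
Lemma upper_bound_pos (f : nat -> H) B :
  infinite_dimensional H -> frame H f -> upper_frame_bound H f B -> 0 < B.
Proof.
  intros Hinf Hfr Hub. destruct (nonzero_vector Hinf) as [x Hx].
  destruct (frame_on_nsq _ _ Hfr) as [A [K [HA [_ Hs]]]]. destruct (Hs x) as [s [Hsum [Hl _]]].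
  assert (s <= B * nsq x).
  { apply (lim_le _ _ _ Hsum). intros [|M].
    - unfold psum; simpl. pose proof (Hub x O) as h. rewrite hnorm2 in h. simpl in h.
      pose proof (coef2_nonneg (fun _ => true) f x O). lra.
    - rewrite psum_sum. pose proof (Hub x M) as h. rewrite hnorm2 in h. exact h. }
  assert (0 < A * nsq x) by (apply Rmult_lt_0_compat; assumption).
  destruct (Rle_or_lt B 0); [|assumption]. nra.
Qed.

(* Each frame vector has ||f_n||^2 <= B: test the bound on x = f_n. *)
Lemma frame_vector_bound (f : nat -> H) B :
  upper_frame_bound H f B -> 0 < B -> forall n, nsq (f n) <= B.
Proof.
  intros Hub HB n. pose proof (upper_bound_psum f B Hub (Rlt_le _ _ HB) (f n) (S n)) as h.
  rewrite psum_S, inner_self_Cnorm2 in h.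
  pose proof (psum_nonneg (fun m => Cnorm2 (inner H (f n) (f m))) n (fun m => Cnorm2_nonneg _)).
  pose proof (nsq_nonneg (f n)).
  destruct (Req_dec (nsq (f n)) 0) as [E|E]; [lra|]. nra.
Qed.

End UpperFrameBounds.

Lemma near_minimizer {T : Type} (phi : T -> R) (m : R) (y0 : T) (eta : R) :
  0 < eta -> (forall y, m <= phi y) -> exists y, forall y', phi y < phi y' + eta.
Proof.
  intros Heta Hm. set (E := fun r => exists y, r = - phi y).
  assert (Hb : bound E) by (exists (- m); intros r [y ->]; pose proof (Hm y); lra).
  destruct (completeness E Hb (ex_intro _ (- phi y0) (ex_intro _ y0 eq_refl))) as [s [Hs1 Hs2]].
  destruct (classic (exists y, s - eta < - phi y)) as [[y Hy]|Hn].
  - exists y. intro y'. assert (- phi y' <= s) by (apply Hs1; exists y'; reflexivity). lra.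
  - exfalso. assert (s <= s - eta); [|lra]. apply Hs2. intros r [y ->].
    apply Rnot_lt_le. intro h. apply Hn. exists y. exact h.
Qed.

(* If 2tD + t^2 Qz > -eta for every real t and 0 <= Qz <= K n, then
   |D| <= eta K + n/4 (evaluate at t = +-1/(2K)). *)
Lemma quadratic_lower_bound (D Qz eta K n : R) : 0 < K -> 0 <= Qz -> Qz <= K * n ->
  (forall t, - eta < 2 * t * D + t * t * Qz) -> Rabs D <= eta * K + n / 4.
Proof.
  intros HK HQ HQn Ht. set (u := / (2 * K)).
  assert (Hu : 2 * K * u = 1) by (unfold u; field; lra).
  assert (Hu0 : 0 < u) by (unfold u; apply Rinv_0_lt_compat; lra).
  assert (HuD : K * (2 * u * D) = D)
    by (replace (K * (2 * u * D)) with ((2 * K * u) * D) by ring; rewrite Hu; ring).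
  assert (HuQ : K * (u * u * Qz) <= n / 4).
  { replace (n / 4) with (K * (u * u * K * n))
      by (replace (K * (u * u * K * n)) with ((2*K*u) * (2*K*u) * n / 4) by field; rewrite Hu; field).
    apply Rmult_le_compat_l; [lra|]. assert (0 <= u * u) by nra. nra. }
  pose proof (Ht u) as h1. pose proof (Ht (- u)) as h2.
  apply Rmult_lt_compat_l with (r := K) in h1; [|exact HK].
  apply Rmult_lt_compat_l with (r := K) in h2; [|exact HK].
  apply Rabs_le. split; nra.
Qed.

Section PartialSynthesis.
Context {H : CInnerSpace}.
Variables (P : nat -> bool) (f : nat -> H).

Fixpoint synth (y : H) (M : nat) : H :=
  match M with
  | O => vzero H
  | S M' => if P M' then vadd H (synth y M') (vscal H (inner H y (f M')) (f M'))
            else synth y M'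
  end.

Lemma synth_spanned y M : spanned (map f (filter P (seq 0 M))) (synth y M).
Proof.
  induction M as [|M IH]; cbn [synth]; [apply sp_zero|].
  rewrite seq_S, filter_app, map_app. simpl. destruct (P M).
  - apply sp_add.
    + apply (spanned_incl (map f (filter P (seq 0 M)))); [apply incl_appl, incl_refl|exact IH].
    + apply sp_scal, sp_base, in_or_app. right; left; reflexivity.
  - rewrite app_nil_r. exact IH.
Qed.

(* The real part of <y,f_n> conj <z,f_n> (for P n), obtained by polarization. *)
Definition polar_coef (y z : H) (n : nat) : R :=
  (coef2 H P f (vadd H y z) n - coef2 H P f y n - coef2 H P f z n) / 2.

Lemma synth_inner y z M : Re (inner H (synth y M) z) = psum (polar_coef y z) M.
Proof.
  induction M as [|M IH]; cbn [synth]; [rewrite inner_zero_l; reflexivity|].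
  rewrite psum_S, <- IH. unfold polar_coef, coef2. destruct (P M); [|field].
  rewrite inner_add, inner_scal, inner_add, (inner_conj H (f M) z).
  destruct (inner H y (f M)), (inner H z (f M)), (inner H (synth y M) z). cx_simpl. field.
Qed.

Lemma coef2_expand y z t n :
  coef2 H P f (vadd H y (vscal H (rs t) z)) n =
  coef2 H P f y n + 2 * t * polar_coef y z n + t * t * coef2 H P f z n.
Proof.
  unfold polar_coef, coef2. destruct (P n); [|field].
  rewrite !inner_add, inner_scal. destruct (inner H y (f n)), (inner H z (f n)). cx_simpl. field.
Qed.

Lemma polar_coef_bound y z K n : 0 < K ->
  Rabs (polar_coef y z n) <= K * coef2 H P f y n + coef2 H P f z n / (4 * K).
Proof.
  intros HK. unfold polar_coef, coef2. destruct (P n).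
  - rewrite !inner_add. destruct (inner H y (f n)) as [a1 a2], (inner H z (f n)) as [b1 b2].
    cx_simpl.
    replace (((a1 + b1) * (a1 + b1) + (a2 + b2) * (a2 + b2) - (a1 * a1 + a2 * a2) -
      (b1 * b1 + b2 * b2)) / 2) with (a1 * b1 + a2 * b2) by field.
    assert (Hm : 0 <= ((2*K*a1 - b1)^2 + (2*K*a2 - b2)^2) / (4 * K))
      by (unfold Rdiv; apply Rle_mult_inv_pos; [apply Rplus_le_le_0_compat; apply pow2_ge_0|lra]).
    assert (Hp : 0 <= ((2*K*a1 + b1)^2 + (2*K*a2 + b2)^2) / (4 * K))
      by (unfold Rdiv; apply Rle_mult_inv_pos; [apply Rplus_le_le_0_compat; apply pow2_ge_0|lra]).
    replace (((2*K*a1 - b1)^2 + (2*K*a2 - b2)^2) / (4 * K)) with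
      (K * (a1 * a1 + a2 * a2) + (b1 * b1 + b2 * b2) / (4 * K) - (a1 * b1 + a2 * b2))
      in Hm by (field; lra).
    replace (((2*K*a1 + b1)^2 + (2*K*a2 + b2)^2) / (4 * K)) with
      (K * (a1 * a1 + a2 * a2) + (b1 * b1 + b2 * b2) / (4 * K) + (a1 * b1 + a2 * b2))
      in Hp by (field; lra).
    apply Rabs_le. lra.
  - replace ((0 - 0 - 0) / 2) with 0 by field. rewrite Rabs_R0.
    replace (K * 0 + 0 / (4 * K)) with 0 by (field; lra). lra.
Qed.

Lemma polar_block_bound y z K M d : 0 < K ->
  Rabs (psum (polar_coef y z) (M + d) - psum (polar_coef y z) M) <=
  K * (psum (coef2 H P f y) (M + d) - psum (coef2 H P f y) M) +
  (psum (coef2 H P f z) (M + d) - psum (coef2 H P f z) M) / (4 * K).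
Proof.
  intros HK. induction d as [|d IH].
  - rewrite Nat.add_0_r. unfold Rminus. rewrite !Rplus_opp_r, Rabs_R0. unfold Rdiv. lra.
  - rewrite Nat.add_succ_r, !psum_S.
    pose proof (polar_coef_bound y z K (M + d) HK).
    pose proof (Rabs_triang (psum (polar_coef y z) (M + d) - psum (polar_coef y z) M)
                            (polar_coef y z (M + d))).
    replace (psum (polar_coef y z) (M + d) + polar_coef y z (M + d) - psum (polar_coef y z) M)
      with (psum (polar_coef y z) (M + d) - psum (polar_coef y z) M + polar_coef y z (M + d))
      by ring.
    replace ((psum (coef2 H P f z) (M + d) + coef2 H P f z (M + d) - psum (coef2 H P f z) M)
               / (4 * K))
      with ((psum (coef2 H P f z) (M + d) - psum (coef2 H P f z) M) / (4 * K)
            + coef2 H P f z (M + d) / (4 * K)) by (field; lra).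
    lra.
Qed.

End PartialSynthesis.

Section FrameEnergy.
Context {H : CInnerSpace}.
Variables (P : nat -> bool) (f : nat -> H) (A K : R) (Q : H -> R).
Hypothesis HA : 0 < A.
Hypothesis HK : 0 < K.
Hypothesis HQsum : forall x, infinite_sum (coef2 H P f x) (Q x).
Hypothesis HQbnd : forall x, A * nsq x <= Q x /\ Q x <= K * nsq x.

Definition Qpolar (y z : H) : R := (Q (vadd H y z) - Q y - Q z) / 2.

Lemma Qpolar_sum y z : infinite_sum (polar_coef P f y z) (Qpolar y z).
Proof.
  pose proof (infinite_sum_lin _ _ _ _ (1/2) (-1/2) (HQsum (vadd H y z)) (HQsum y)) as h1.
  pose proof (infinite_sum_lin _ _ _ _ 1 (-1/2) h1 (HQsum z)) as h2.
  unfold Qpolar. replace ((Q (vadd H y z) - Q y - Q z) / 2) with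
    (1 * (1 / 2 * Q (vadd H y z) + -1 / 2 * Q y) + -1 / 2 * Q z) by field.
  eapply infinite_sum_ext; [|exact h2]. intro n. unfold polar_coef. field.
Qed.

Lemma Q_expand y z t :
  Q (vadd H y (vscal H (rs t) z)) = Q y + 2 * t * Qpolar y z + t * t * Q z.
Proof.
  apply (uniqueness_sum (coef2 H P f (vadd H y (vscal H (rs t) z)))); [apply HQsum|].
  pose proof (infinite_sum_lin _ _ _ _ 1 (2 * t) (HQsum y) (Qpolar_sum y z)) as h1.
  pose proof (infinite_sum_lin _ _ _ _ 1 (t * t) h1 (HQsum z)) as h2.
  replace (Q y + 2 * t * Qpolar y z + t * t * Q z)
    with (1 * (1 * Q y + 2 * t * Qpolar y z) + t * t * Q z) by ring.
  eapply infinite_sum_ext; [|exact h2]. intro n. simpl. rewrite coef2_expand. ring.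
Qed.

Variable g : H.

(* The energy Q(y) - 2 Re <g,y>; its infimum would be attained at the preimage of g
   under the frame operator, but only near-minimisers are needed. *)
Definition energy (y : H) : R := Q y - 2 * Re (inner H g y).

(* From 0 <= ||g - A y||^2 and A ||y||^2 <= Q y. *)
Lemma energy_lower_bound y : - nsq g / A <= energy y.
Proof.
  pose proof (nsq_add_rs g y (- A)). pose proof (nsq_nonneg (vadd H g (vscal H (rs (- A)) y))).
  destruct (HQbnd y) as [h _]. unfold energy.
  apply (Rmult_le_reg_l A); [exact HA|].
  replace (A * (- nsq g / A)) with (- nsq g) by (field; lra). nra.
Qed.

(* Near-minimality along every line y + t z controls the first variation. *)
Lemma near_min_variation y eta : (forall y', energy y < energy y' + eta) ->
  forall z, Rabs (Qpolar y z - Re (inner H g z)) <= eta * K + nsq z / 4.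
Proof.
  intros Hy z. destruct (HQbnd z) as [HQz1 HQz2].
  apply (quadratic_lower_bound _ (Q z)); [exact HK | pose proof (nsq_nonneg z); nra | exact HQz2 |].
  intro t. pose proof (Hy (vadd H y (vscal H (rs t) z))) as h. unfold energy in h.
  rewrite Q_expand, inner_add_r, inner_scal_r in h. cx_simpl. nra.
Qed.

Lemma polar_truncation y z M :
  Rabs (Qpolar y z - psum (polar_coef P f y z) M)
  <= K * (Q y - psum (coef2 H P f y) M) + nsq z / 4.
Proof.
  apply (lim_dist _ _ _ _ M (Qpolar_sum y z)). intros N HN.
  replace N with (M + (N - M))%nat by lia.
  pose proof (polar_block_bound P f y z K M (N - M) HK).
  set (Sz := psum (coef2 H P f z) (M + (N - M)) - psum (coef2 H P f z) M) in *.
  assert (K * psum (coef2 H P f y) (M + (N - M)) <= K * Q y).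
  { apply Rmult_le_compat_l; [lra|]. apply psum_le_lim; [apply coef2_nonneg|apply HQsum]. }
  assert (HSz : Sz <= K * nsq z).
  { pose proof (psum_le_lim _ _ (M + (N - M)) (coef2_nonneg P f z) (HQsum z)).
    pose proof (psum_nonneg (coef2 H P f z) M (coef2_nonneg P f z)).
    destruct (HQbnd z). unfold Sz. lra. }
  assert (Sz / (4 * K) <= nsq z / 4).
  { apply (Rmult_le_reg_l (4 * K)); [lra|].
    replace (4 * K * (Sz / (4 * K))) with Sz by (field; lra). lra. }
  lra.
Qed.

Lemma residual_small y eta M : (forall y', energy y < energy y' + eta) ->
  Q y - psum (coef2 H P f y) M < eta ->
  nsq (vsub H g (synth P f y M)) <= 4 * K * eta.
Proof.
  intros Hy Htail. set (z := vsub H g (synth P f y M)).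
  pose proof (near_min_variation y eta Hy z) as Hvar.
  pose proof (polar_truncation y z M) as Htrunc.
  assert (Hz : nsq z = Re (inner H g z) - psum (polar_coef P f y z) M)
    by (unfold z at 1; rewrite nsq_vsub, synth_inner; reflexivity).
  pose proof (Rle_abs (- (Qpolar y z - Re (inner H g z)))) as Hneg. rewrite Rabs_Ropp in Hneg.
  pose proof (Rle_abs (Qpolar y z - psum (polar_coef P f y z) M)).
  assert (K * (Q y - psum (coef2 H P f y) M) <= K * eta) by (apply Rmult_le_compat_l; lra).
  lra.
Qed.

End FrameEnergy.

Lemma frame_approximation {H : CInnerSpace} (P : nat -> bool) (f : nat -> H) :
  frame_on H P f -> forall (g : H) eps, 0 < eps -> exists M0, forall M, (M0 <= M)%nat ->
  exists v, spanned (map f (filter P (seq 0 M))) v /\ nsq (vsub H g v) <= eps.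
Proof.
  intros Hfr g eps Heps.
  destruct (frame_on_nsq P f Hfr) as [A [K [HA [HK Hx]]]].
  destruct (choice (fun x s => infinite_sum (coef2 H P f x) s)) as [Q HQsum].
  { intro x. destruct (Hx x) as [s [Hs _]]. exists s; exact Hs. }
  assert (HQbnd : forall x, A * nsq x <= Q x /\ Q x <= K * nsq x).
  { intro x. destruct (Hx x) as [s [Hs Hb]]. rewrite (uniqueness_sum _ _ _ (HQsum x) Hs). exact Hb. }
  set (eta := eps / (4 * K)).
  assert (Heta : 0 < eta) by (unfold eta; apply Rdiv_lt_0_compat; lra).
  destruct (near_minimizer (energy Q g) (- nsq g / A) (vzero H) eta Heta
              (energy_lower_bound A K Q HA HQbnd g)) as [y Hy].
  destruct (cv_psum _ _ (HQsum y) eta Heta) as [N HN].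
  exists N. intros M HM. exists (synth P f y M). split; [apply synth_spanned|].
  replace eps with (4 * K * eta) by (unfold eta; field; lra).
  apply (residual_small P f A K Q HA HK HQsum HQbnd g y eta M Hy).
  pose proof (HN M HM) as Hclose. rewrite Rabs_minus_sym in Hclose.
  pose proof (Rle_abs (Q y - psum (coef2 H P f y) M)). lra.
Qed.
Lemma eventually_all {A : Type} (Pr : A -> nat -> Prop) (l : list A) :
  (forall s, In s l -> exists M0, forall M, (M0 <= M)%nat -> Pr s M) ->
  exists M0, forall M, (M0 <= M)%nat -> forall s, In s l -> Pr s M.
Proof.
  induction l as [|a l IH]; intros Hl.
  - exists O. intros M _ s [].
  - destruct (Hl a (or_introl eq_refl)) as [Ma Ha].
    destruct IH as [Ml Hml]; [intros; apply Hl; right; assumption|].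
    exists (Nat.max Ma Ml). intros M HM s [<-|Hs].
    + apply Ha. lia.
    + apply Hml; [lia|exact Hs].
Qed.

Definition memb (l : list nat) (n : nat) : bool :=
  if in_dec Nat.eq_dec n l then true else false.

Lemma memb_true (l : list nat) n : In n l -> memb l n = true.
Proof. unfold memb. destruct (in_dec Nat.eq_dec n l); [reflexivity|contradiction]. Qed.

Lemma memb_false (l : list nat) n : ~ In n l -> memb l n = false.
Proof. unfold memb. destruct (in_dec Nat.eq_dec n l); [contradiction|reflexivity]. Qed.

Section ExcessCount.
Context {H : CInnerSpace}.
Variables (f : nat -> H) (B : R).
Hypothesis Hub : upper_frame_bound H f B.
Hypothesis HBpos : 0 < B.

Lemma frame_mass_orthonormal ys M : orthonormal ys ->
  lsum (fun n => lsum (fun y => Cnorm2 (inner H (f n) y)) ys) (seq 0 M) <= B * INR (length ys).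
Proof.
  intros HO. rewrite lsum_swap, <- lsum_const. apply lsum_le. intros y Hy.
  rewrite (lsum_ext _ (fun n => Cnorm2 (inner H y (f n))))
    by (intro; rewrite inner_conj, Cnorm2_conj; reflexivity).
  pose proof (upper_bound_psum f B Hub (Rlt_le _ _ HBpos) y M) as h. unfold psum in h.
  rewrite (orthonormal_nsq ys HO y Hy) in h. lra.
Qed.

(* Let s_1..s_k < M be distinct indices outside P, each f_s
   within squared distance B/2 of the span of the f_n (n < M, P n).  An orthonormal
   basis ys of the span of the f_n (n < M, n not an s_i) has at most M - k vectors;
   by Bessel, ||f_n||^2 <= sum_y |<f_n,y>|^2 (+ B/2 if n = s_i), and summing over n < M
   gives sum ||f_n||^2 <= B (M - k) + k B/2. *)
Lemma excess_count (P : nat -> bool) (l0 : list nat) (M : nat) :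
  NoDup l0 -> (forall s, In s l0 -> P s = false) ->
  (forall s, In s l0 -> (s < M)%nat /\ exists v,
     spanned (map f (filter P (seq 0 M))) v /\ nsq (vsub H (f s) v) <= B / 2) ->
  B / 2 * INR (length l0) <= psum (fun n => B - nsq (f n)) M.
Proof.
  intros Hnd HP Happ.
  set (idx := filter (fun n => negb (memb l0 n)) (seq 0 M)).
  destruct (gram_schmidt (map f idx)) as [ys [HO [Hlen Hsp]]].
  rewrite length_map in Hlen.
  assert (Hincl : incl (map f (filter P (seq 0 M))) (map f idx)).
  { apply incl_map. intros n Hn. apply filter_In in Hn as [Hn HPn]. apply filter_In.
    split; [exact Hn|]. rewrite memb_false; [reflexivity|].
    intro Hl. rewrite (HP n Hl) in HPn. discriminate. }
  assert (Hpt : forall n, In n (seq 0 M) -> nsq (f n) <=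
            lsum (fun y => Cnorm2 (inner H (f n) y)) ys + (if memb l0 n then B / 2 else 0)).
  { intros n Hn. destruct (in_dec Nat.eq_dec n l0) as [Hl|Hl].
    - rewrite memb_true by exact Hl. destruct (Happ n Hl) as [_ [v [Hv Hdist]]].
      pose proof (bessel_dist ys (f n) v HO (spanned_trans _ _ _ (spanned_incl _ _ _ Hincl Hv) Hsp)).
      lra.
    - rewrite memb_false by exact Hl.
      assert (Hfs : spanned ys (f n)).
      { apply Hsp, in_map, filter_In. rewrite memb_false by exact Hl. split; [exact Hn|reflexivity]. }
      pose proof (bessel_dist ys (f n) (f n) HO Hfs) as Hb. rewrite vsub_self, nsq_vzero in Hb. lra. }
  apply lsum_le in Hpt. rewrite lsum_plus, lsum_indicator in Hpt.
  pose proof (frame_mass_orthonormal ys M HO).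
  set (c := length (filter (memb l0) (seq 0 M))) in *.
  assert (Hc : (length idx + c = M)%nat).
  { pose proof (filter_length (memb l0) (seq 0 M)). rewrite length_seq in *. unfold idx, c. lia. }
  assert (Hlc : (length l0 <= c)%nat).
  { apply NoDup_incl_length; [exact Hnd|]. intros s Hs. apply filter_In.
    split; [apply in_seq; destruct (Happ s Hs); lia | apply memb_true, Hs]. }
  unfold psum. rewrite lsum_minus, lsum_const, length_seq.
  replace (INR M) with (INR (length idx) + INR c) by (rewrite <- plus_INR, Hc; reflexivity).
  assert (B * INR (length ys) <= B * INR (length idx)) by (apply Rmult_le_compat_l; [lra | apply le_INR; lia]).
  assert (B / 2 * INR (length l0) <= B / 2 * INR c) by (apply Rmult_le_compat_l; [lra | apply le_INR; lia]).
  lra.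
Qed.

End ExcessCount.

Theorem proposition3p4 (H : CInnerSpace) (f : nat -> H) (B : R)
  (Hcomplete : complete H) (Hsep : separable H) (Hinf : infinite_dimensional H)
  (Hframe : frame H f) (HB : optimal_upper_frame_bound H f B)
  (Hconv : exists l : R, infinite_sum (fun n => B - (hnorm H (f n))^2) l) :
  near_Riesz_basis H f.
Proof.
  split; [exact Hframe|].
  pose proof (optimal_bound_upper f B HB) as Hub.
  pose proof (upper_bound_pos f B Hinf Hframe Hub) as HBpos.
  destruct Hconv as [L HL].
  assert (HLbound : forall M, psum (fun n => B - nsq (f n)) M <= L).
  { intro M. apply psum_le_lim; [intro n; pose proof (frame_vector_bound f B Hub HBpos n); lra|].
    eapply infinite_sum_ext; [|exact HL]. intro n. cbv beta. rewrite hnorm2. reflexivity. }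
  (* At most 2L/B elements can be removed. *)
  destruct (nat_above (2 * L / B)) as [N HN].
  exists N. intros Del HDel l0 Hnd Hin.
  destruct (eventually_all (fun s M => (s < M)%nat /\ exists v,
      spanned (map f (filter (fun n => negb (Del n)) (seq 0 M))) v /\
      nsq (vsub H (f s) v) <= B / 2) l0) as [M HM].
  { intros s _. destruct (frame_approximation _ f HDel (f s) (B / 2)) as [M0 HM0]; [lra|].
    exists (Nat.max M0 (S s)). intros M HMle. split; [lia|]. apply HM0. lia. }
  pose proof (excess_count f B Hub HBpos (fun n => negb (Del n)) l0 M Hnd
                (fun s Hs => f_equal negb (Hin s Hs)) (HM M (le_n M))) as Hcount.
  pose proof (HLbound M).
  apply INR_le. apply (Rle_trans _ (2 * L / B)); [|exact HN].
  apply (Rmult_le_reg_l (B / 2)); [lra|].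
  replace (B / 2 * (2 * L / B)) with L by (field; lra). lra.
Qed.
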